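(* Let $\mathcal{R}$ be a ring and let $(\mathcal{C}^{\bullet},\partial)$ be a bigraded cochain complex of $\mathcal{R}$-modules as described in the context. Then there are three commutative diagrams with exact rows and exact columns. The first has rows \[ 0\to B^{3}(\mathcal{C},\partial)\cap\mathcal{C}^{3,0}\hookrightarrow B^{3}(\mathcal{C},\partial)\xrightarrow{\pi_{1}}\mathcal{B}^{3}_{1}\to0,\quad 0\to Z^{3}(\mathcal{N}_{0},\overline{\partial})\hookrightarrow Z^{3}(\mathcal{C},\partial)\xrightarrow{\pi_{1}}\ker(\rho_{3})\to0, \] \[ 0\to\frac{Z^{3}(\mathcal{N}_{0},\overline{\partial})}{B^{3}(\mathcal{C},\partial)\cap\mathcal{C}^{3,0}}\to H^{3}(\mathcal{C},\partial)\to\frac{\ker(\rho_{3})}{\mathcal{B}^{3}_{1}}\to0; \] the second has rows \[ 0\to\mathcal{B}^{3}_{1}\cap\mathcal{C}^{2,1}\hookrightarrow\mathcal{B}^{3}_{1}\xrightarrow{\pi_{2}}\mathcal{B}^{3}_{2}\to0,\quad 0\to\ker(\varrho_{3})\hookrightarrow\ker(\rho_{3})\xrightarrow{\pi_{2}}\mathcal{Z}^{3}_{2}\to0, \] \[ 0\to\frac{\ker(\varrho_{3})}{\mathcal{B}^{3}_{1}\cap\mathcal{C}^{2,1}}\to\frac{\ker(\rho_{3})}{\mathcal{B}^{3}_{1}}\to\frac{\mathcal{Z}^{3}_{2}}{\mathcal{B}^{3}_{2}}\to0; \] and the third has rows \[ 0\to\mathcal{B}^{3}_{2}\cap\mathcal{C}^{1,2}\hookrightarrow\mathcal{B}^{3}_{2}\xrightarrow{\pi_{3}}B^{3}(\mathcal{C}^{0,\bullet},\partial_{0,1})\to0,\quad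 0\to\mathcal{Z}^{3}_{2}\cap\mathcal{C}^{1,2}\hookrightarrow\mathcal{Z}^{3}_{2}\xrightarrow{\pi_{3}}\mathcal{Z}^{3}_{3}\to0, \] \[ 0\to\frac{\mathcal{Z}^{3}_{2}\cap\mathcal{C}^{1,2}}{\mathcal{B}^{3}_{2}\cap\mathcal{C}^{1,2}}\to\frac{\mathcal{Z}^{3}_{2}}{\mathcal{B}^{3}_{2}}\to\frac{\mathcal{Z}^{3}_{3}}{B^{3}(\mathcal{C}^{0,\bullet},\partial_{0,1})}\to0. \] In each diagram the first two rows are listed first (top row, then middle row), the vertical maps from the top to the middle row are inclusions, those from the middle to the bottom row are the canonical quotient projections, and the maps of the bottom row are induced by those of the middle row.
   Context: Setting: $\mathcal{C}^{\bullet}=\bigoplus_{k}\mathcal{C}^{k}$ is a graded $\mathcal{R}$-module with compatible bigrading $\mathcal{C}^{k}=\bigoplus_{p+q=k}\mathcal{C}^{p,q}$, $\mathcal{C}^{p,q}=\{0\}$ if $p<0$ or $q<0$; $\partial$ is $\mathcal{R}$-linear of degree $1$, $\partial^{2}=0$, and $\partial=\partial_{2,-1}+\partial_{1,0}+\partial_{0,1}$ with $\partial_{i,j}(\mathcal{C}^{p,q})\subseteq\mathcal{C}^{p+i,q+j}$. For $\eta\in\mathcal{C}^{k}$, $\eta_{p,q}$ is its $\mathcal{C}^{p,q}$-component. $G^{q}\mathcal{C}:=\bigoplus_{j\geq q}\mathcal{C}^{i,j}$ and $\pi_{q}:\mathcal{C}\to G^{q}\mathcal{C}$ is the projection along the bigrading.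 $Z,B,H$ denote cocycles, coboundaries, cohomology; $(\mathcal{C}^{0,\bullet},\partial_{0,1})$ is a cochain complex. Let $\mathcal{N}^{p,q}:=\ker(\partial_{0,1}|_{\mathcal{C}^{p,q}})\cap\ker(\partial_{2,-1}|_{\mathcal{C}^{p,q}})$ and, for $q\ge0$, $\mathcal{N}_{q}:=\bigoplus_{p}\mathcal{N}^{p-q,q}$ (degree-$m$ part $\mathcal{N}^{m-q,q}$); each $\mathcal{N}_{q}$ is a subcomplex of $(\mathcal{C},\partial)$, with differential $\overline{\partial}:=\partial|_{\mathcal{N}_q}=\partial_{1,0}|_{\mathcal{N}_q}$. Let $\mathcal{M}^{k}:=\{\eta\in\mathcal{C}^{k}\mid(\partial\eta)_{i,j}\in B^{k+1}(\mathcal{N}_{j},\overline{\partial})\ \text{for all } i+j=k+1\}$, $\mathcal{Z}^{k}_{q}:=\{\pi_{q}(\eta)\mid\eta\in\mathcal{M}^{k},\ \pi_{q}(\partial\eta)=0\}$ and $\mathcal{B}^{k}_{q}:=\pi_{q}(B^{k}(\mathcal{C},\partial))$. Let $\mathcal{A}^{k}:=\{\pi_{1}(\eta)\mid\eta\in\mathcal{C}^{k},\ \pi_{1}(\partial\eta)=0\}$ and $\mathcal{J}^{k}:=\mathcal{A}^{k}\cap\mathcal{C}^{k-1,1}$. For $\xi\in\mathcal{A}^{k}$ and any $\eta\in\mathcal{C}^{k}$ with $\pi_{1}\eta=\xi$, $\pi_{1}(\partial\eta)=0$, the element $\partial_{2,-1}\xi_{k-1,1}+\partial_{1,0}\eta_{k,0}$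 is a $(k+1)$-cocycle of $(\mathcal{N}_{0},\overline{\partial})$ whose class depends only on $\xi$; this defines the linear map $\rho_{k}:\mathcal{A}^{k}\to H^{k+1}(\mathcal{N}_{0},\overline{\partial})$, $\rho_{k}(\xi):=[\partial_{2,-1}\xi_{k-1,1}+\partial_{1,0}\eta_{k,0}]$, and $\varrho_{k}:=\rho_{k}|_{\mathcal{J}^{k}}$. *)

From HB Require Import structures.
From mathcomp Require Import all_boot all_order all_algebra.
Set Implicit Arguments. Unset Strict Implicit. Unset Printing Implicit Defensive.
Import GRing.Theory.
Local Open Scope ring_scope.

(* The total module C^* = (+)_k C^k = (+)_{p,q >= 0} C^{p,q} is represented
   as an R-module V together with the family of projections
   pr p q : V -> V onto the summand C^{p,q} (orthogonal idempotents whose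
   finite sums recover every element): this is exactly an internal direct sum
   decomposition V = (+)_{p,q in nat} C^{p,q}.  Negative bidegrees are absent
   (C^{p,q} = 0 for p<0 or q<0) since indices are natural numbers. *)
Record bicomplex (R : pzRingType) (V : lmodType R) := BiComplex {
  pr : nat -> nat -> {linear V -> V};
  pr_idem : forall p q v, pr p q (pr p q v) = pr p q v;
  pr_orth : forall p q p' q' v, (p, q) <> (p', q') -> pr p q (pr p' q' v) = 0;
  pr_fin : forall v, exists N : nat,
      v = \sum_(p < N) \sum_(q < N) pr p q v;
  d : {linear V -> V};
  d21 : {linear V -> V};
  d10 : {linear V -> V};
  d01 : {linear V -> V};
  d_split : forall v, d v = d21 v + d10 v + d01 v;
  dd : forall v, d (d v) = 0;
  d21_deg : forall p q v, pr p.+2 q (d21 (pr p q.+1 v)) = d21 (pr p q.+1 v);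
  d21_deg0 : forall p v, d21 (pr p 0 v) = 0;
  d10_deg : forall p q v, pr p.+1 q (d10 (pr p q v)) = d10 (pr p q v);
  d01_deg : forall p q v, pr p q.+1 (d01 (pr p q v)) = d01 (pr p q v)
}.

Section Defs.
Variables (R : pzRingType) (V : lmodType R) (C : @bicomplex R V).

Local Notation pr := (pr C).
Local Notation d := (d C).
Local Notation d21 := (d21 C).
Local Notation d10 := (d10 C).
Local Notation d01 := (d01 C).

Definition inC (p q : nat) (v : V) : Prop := pr p q v = v.

Definition deg (k : nat) (v : V) : Prop := v = \sum_(p < k.+1) pr p (k - p) v.

(* pi_q on C^k : projection onto (+)_{j >= q} C^{k-j,j} *)
Definition projG (k q : nat) (v : V) : V := \sum_(j < k.+1 | (q <= j)%N) pr (k - j) j v.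

Definition Z_C (k : nat) (v : V) : Prop := deg k v /\ d v = 0.
Definition B_C (k : nat) (v : V) : Prop :=
  match k with 0 => v = 0 | k'.+1 => exists u, deg k' u /\ v = d u end.

(* N^{p,q} and the degree-m part of N_q, namely N^{m-q,q} (zero if m < q) *)
Definition Nc (p q : nat) (v : V) : Prop := inC p q v /\ d01 v = 0 /\ d21 v = 0.
Definition Nq (q m : nat) (v : V) : Prop :=
  if (q <= m)%N then Nc (m - q) q v else v = 0.

Definition Z_N (q k : nat) (v : V) : Prop := Nq q k v /\ d v = 0.
Definition B_N (q k : nat) (v : V) : Prop :=
  match k with 0 => v = 0 | k'.+1 => exists u, Nq q k' u /\ v = d u end.

Definition Mk (k : nat) (eta : V) : Prop :=
  deg k eta /\ forall i j : nat, (i + j = k.+1)%N -> B_N j k.+1 (pr i j (d eta)).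

Definition Zcal (k q : nat) (v : V) : Prop :=
  exists eta, Mk k eta /\ projG k.+1 q (d eta) = 0 /\ v = projG k q eta.
Definition Bcal (k q : nat) (v : V) : Prop :=
  exists b, B_C k b /\ v = projG k q b.

Definition Ak (k : nat) (xi : V) : Prop :=
  exists eta, deg k eta /\ projG k.+1 1 (d eta) = 0 /\ xi = projG k 1 eta.
Definition Jk (k : nat) (xi : V) : Prop := Ak k xi /\ inC k.-1 1 xi.

(* c is a representative cocycle of rho_k(xi):
   c = d_{2,-1} xi_{k-1,1} + d_{1,0} eta_{k,0} for some eta with pi_1 eta = xi,
   pi_1 (d eta) = 0 *)
Definition rho_rep (k : nat) (xi c : V) : Prop :=
  exists eta, deg k eta /\ projG k 1 eta = xi /\ projG k.+1 1 (d eta) = 0 /\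
    c = d21 (pr k.-1 1 xi) + d10 (pr k 0 eta).

(* ker rho_k : those xi in A^k whose class rho_k(xi) in H^{k+1}(N_0) vanishes *)
Definition ker_rho (k : nat) (xi : V) : Prop :=
  Ak k xi /\ exists c, rho_rep k xi c /\ B_N 0 k.+1 c.
Definition ker_varrho (k : nat) (xi : V) : Prop := Jk k xi /\ ker_rho k xi.

Definition B_col (k : nat) (v : V) : Prop :=
  match k with 0 => v = 0 | k'.+1 => exists u, inC 0 k' u /\ v = d01 u end.

End Defs.

Section Diagrams.
Variables (R : pzRingType) (V : lmodType R).

Definition submod (P : V -> Prop) : Prop :=
  P 0 /\ forall (a : R) (x y : V), P x -> P y -> P (a *: x + y).

Definition capP (P Q : V -> Prop) : V -> Prop := fun v => P v /\ Q v.

(* 0 -> A1 --incl--> A2 --f--> A3 -> 0 is exact *)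
Definition ses_incl (A1 A2 : V -> Prop) (f : V -> V) (A3 : V -> Prop) : Prop :=
  [/\ forall x, A1 x -> A2 x,
      forall x, A2 x -> A3 (f x),
      forall x, A1 x -> f x = 0,
      forall x, A2 x -> f x = 0 -> A1 x
    & forall y, A3 y -> exists2 x, A2 x & f x = y].

(* exactness of 0 -> M1/T1 -> M2/T2 -> M3/T3 -> 0, where the maps are induced
   by the inclusion M1 -> M2 and by f : M2 -> M3 (unfolded on representatives) *)
Definition quot_exact (T1 T2 T3 M1 M2 M3 : V -> Prop) (f : V -> V) : Prop :=
  [/\ forall x, M1 x -> T2 x -> T1 x,
      forall x, M1 x -> T3 (f x),
      forall x, M2 x -> T3 (f x) -> exists2 y, M1 y & T2 (x - y)
    & forall z, M3 z -> exists2 x, M2 x & T3 (z - f x)].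

(* The commutative 3x3 diagram
       0 -> T1 -> T2 -f-> T3 -> 0
             v     v       v
       0 -> M1 -> M2 -f-> M3 -> 0
             v     v       v
       0 -> M1/T1 -> M2/T2 -> M3/T3 -> 0
   of R-modules with exact rows and columns (vertical maps: inclusions, then
   canonical projections; bottom row maps induced by the middle row). *)
Definition exact_diagram (T1 T2 T3 M1 M2 M3 : V -> Prop) (f : V -> V) : Prop :=
  [/\ [/\ submod T1, submod T2 & submod T3] /\ [/\ submod M1, submod M2 & submod M3],
      [/\ forall x, T1 x -> M1 x, forall x, T2 x -> M2 x & forall x, T3 x -> M3 x],
      ses_incl T1 T2 f T3,
      ses_incl M1 M2 f M3
    & quot_exact T1 T2 T3 M1 M2 M3 f].

End Diagrams.

(* Every module in the three diagrams is the image of the cocycles Z^3 or of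
   the coboundaries B^3 under a projection pi_j, possibly intersected with the
   bottom piece C^{3-j,j} of G^j: ker rho_3 = pi_1 Z^3 and Z^3_j = pi_j Z^3,
   because an eta in M^3 whose differential vanishes in G^j can be corrected,
   by the elements of the N_i witnessing that the lower components of d eta
   lie in B(N_i), into a cocycle with the same image under pi_j; likewise
   B^3(C^{0,*}) = pi_3 B^3, Z^3(N_0) = Z^3 cap C^{3,0} and
   ker varrho_3 = pi_1 Z^3 cap C^{2,1}.  On pi_j Z^3 the kernel of pi_{j+1} is
   exactly C^{3-j,j}, so each diagram is the 3x3 diagram of a pair of
   submodules T <= M and a linear map whose kernel on M is a submodule K, and
   its rows are exact by a diagram chase. *)

From HB Require Import structures.
From mathcomp Require Import all_boot all_order all_algebra zify.
From Stdlib Require Import FunctionalExtensionality PropExtensionality.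
Set Implicit Arguments. Unset Strict Implicit. Unset Printing Implicit Defensive.
Import GRing.Theory.
Local Open Scope ring_scope.

Section ExactDiagrams.
Variables (R : pzRingType) (V : lmodType R).
Implicit Types (P Q T M K : V -> Prop) (x y : V).

Lemma predext P Q : (forall x, P x <-> Q x) -> P = Q.
Proof.
by move=> PQ; apply: functional_extensionality => x; apply: propositional_extensionality.
Qed.

Definition imageP (f : V -> V) P y : Prop := exists x, P x /\ y = f x.

Lemma submodB P x y : submod P -> P x -> P y -> P (x - y).
Proof. by case=> _ Plin Px Py; rewrite -scaleN1r addrC; apply: Plin. Qed.

Lemma submod_cap P Q : submod P -> submod Q -> submod (capP P Q).
Proof.
case=> P0 Plin [Q0 Qlin]; split=> // a x y [Px Qx] [Py Qy].
by split; [apply: Plin | apply: Qlin].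
Qed.

Lemma submod_image (f : {linear V -> V}) P : submod P -> submod (imageP f P).
Proof.
case=> P0 Plin; split; first by exists 0; rewrite linear0.
move=> a _ _ [x [Px ->]] [y [Py ->]].
by exists (a *: x + y); rewrite linearP; split; first exact: Plin.
Qed.

Lemma exact_diagram_image T M K (f : {linear V -> V}) :
  submod T -> submod M -> submod K -> (forall x, T x -> M x) ->
  (forall x, M x -> f x = 0 <-> K x) ->
  exact_diagram (capP T K) T (imageP f T) (capP M K) M (imageP f M) f.
Proof.
move=> sT sM sK TM kerf.
have ses S : submod S -> (forall x, S x -> M x) -> ses_incl (capP S K) S f (imageP f S).
  move=> sS SM; split=> [x [] | x Sx | x [Sx Kx] | x Sx fx0 | _ [x [Sx ->]]] //.
  - by exists x.
  - exact/(kerf x (SM x Sx)).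
  - by split=> //; apply/(kerf x (SM x Sx)).
  - by exists x.
split.
- by split; split; do ?[exact: submod_cap | exact: submod_image].
- split=> [x [Tx Kx] | x | _ [x [Tx ->]]]; first by split; first exact: TM.
  + exact: TM.
  + by exists x; split; first exact: TM.
- exact: ses.
- exact: ses.
split=> [x [_ Kx] Tx | x [Mx Kx] | x Mx [t [Tt ftx]] | _ [x [Mx ->]]]; first by [].
- by exists 0; split; [case: sT | rewrite (kerf x Mx).2 // linear0].
- have Mxt : M (x - t) by apply: submodB => //; exact: TM.
  exists (x - t); first by split=> //; apply/(kerf _ Mxt); rewrite linearB ftx subrr.
  by rewrite opprB addrC subrK.
- by exists x => //; exists 0; split; [case: sT | rewrite subrr linear0].
Qed.

End ExactDiagrams.

Section Bicomplex.
Variables (R : pzRingType) (V : lmodType R) (C : @bicomplex R V).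
Local Notation pr := (pr C).
Local Notation d := (d C).
Local Notation d21 := (d21 C).
Local Notation d10 := (d10 C).
Local Notation d01 := (d01 C).
Implicit Types (x y u v : V) (k p q a b i j : nat).

Lemma pr_pr p q a b v :
  pr p q (pr a b v) = if (p == a) && (q == b) then pr a b v else 0.
Proof.
case: ifP => [/andP[/eqP-> /eqP->] | neq]; first exact: pr_idem.
by apply: pr_orth => -[ep eq]; rewrite ep eq !eqxx in neq.
Qed.

Lemma pr_inC p q a b u : inC C a b u -> pr p q u = if (p == a) && (q == b) then u else 0.
Proof. by move=> Cu; rewrite -{1}Cu pr_pr Cu. Qed.

Lemma eq_from_pr x y : (forall p q, pr p q x = pr p q y) -> x = y.
Proof.
move=> eq_xy; apply/eqP; rewrite -subr_eq0; apply/eqP.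
have [N ->] := pr_fin C (x - y).
by rewrite big1 // => a _; rewrite big1 // => b _; rewrite linearB /= eq_xy subrr.
Qed.

Lemma eq_linear_pr (f g : {linear V -> V}) :
  (forall a b v, f (pr a b v) = g (pr a b v)) -> f =1 g.
Proof.
move=> fg v; have [N ->] := pr_fin C v.
by rewrite !linear_sum; apply: eq_bigr => a _; rewrite !linear_sum; apply: eq_bigr.
Qed.

Lemma pr_d21 p q v :
  pr p q (d21 v) = if (1 < p)%N then d21 (pr p.-2 q.+1 v) else 0.
Proof.
case: p => [|[|p]] /=; last first.
  apply: (@eq_linear_pr (pr p.+2 q \o d21) (d21 \o pr p q.+1)) => a [|b] w /=.
    by rewrite d21_deg0 pr_pr andbF !linear0.
  by rewrite -d21_deg !pr_pr !eqSS (fun_if d21) linear0 d21_deg.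
all: apply: (@eq_linear_pr (pr _ q \o d21) \0) => a [|b] w /=.
all: by rewrite ?d21_deg0 ?linear0 // -d21_deg pr_pr.
Qed.

Lemma pr_d10 p q v : pr p q (d10 v) = if (0 < p)%N then d10 (pr p.-1 q v) else 0.
Proof.
case: p => [|p] /=.
  apply: (@eq_linear_pr (pr 0 q \o d10) \0) => a b w /=.
  by rewrite -d10_deg pr_pr.
apply: (@eq_linear_pr (pr p.+1 q \o d10) (d10 \o pr p q)) => a b w /=.
by rewrite -d10_deg !pr_pr eqSS (fun_if d10) linear0 d10_deg.
Qed.

Lemma pr_d01 p q v : pr p q (d01 v) = if (0 < q)%N then d01 (pr p q.-1 v) else 0.
Proof.
case: q => [|q] /=.
  apply: (@eq_linear_pr (pr p 0 \o d01) \0) => a b w /=.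
  by rewrite -d01_deg pr_pr andbF.
apply: (@eq_linear_pr (pr p q.+1 \o d01) (d01 \o pr p q)) => a b w /=.
by rewrite -d01_deg !pr_pr eqSS (fun_if d01) linear0 d01_deg.
Qed.

Lemma pr_d p q v : pr p q (d v) =
  (if (1 < p)%N then d21 (pr p.-2 q.+1 v) else 0) +
  (if (0 < p)%N then d10 (pr p.-1 q v) else 0) +
  (if (0 < q)%N then d01 (pr p q.-1 v) else 0).
Proof. by rewrite d_split !linearD /= pr_d21 pr_d10 pr_d01. Qed.

Lemma degP k v : deg C k v <-> forall p q, (p + q != k)%N -> pr p q v = 0.
Proof.
have pr_off p q : (p + q != k)%N -> \sum_(i < k.+1) pr p q (pr i (k - i) v) = 0.
  move=> npq; rewrite big1 // => i _; rewrite pr_pr.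
  case: ifP => // /andP[/eqP ep /eqP eq].
  by have := ltn_ord i; move: npq; rewrite ep eq => /eqP; lia.
split=> [vk p q npq | v0]; first by rewrite vk linear_sum pr_off.
apply: eq_from_pr => p q; rewrite linear_sum.
have [pqk | npq] := eqVneq (p + q)%N k; last by rewrite v0 // pr_off.
have ltpk : (p < k.+1)%N by lia.
rewrite (bigD1 (Ordinal ltpk)) //= big1 ?addr0 => [|i /eqP nip].
  by rewrite pr_pr (_ : k - p = q)%N ?eqxx //; lia.
rewrite pr_pr; case: ifP => // /andP[/eqP ep _].
by case: nip; apply: val_inj.
Qed.

Lemma inC_deg a b x : inC C a b x -> deg C (a + b) x.
Proof.
move=> Cx; apply/degP => p q npq; rewrite (pr_inC _ _ Cx).
by case: ifP => // /andP[/eqP ep /eqP eq]; rewrite ep eq eqxx in npq.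
Qed.

Lemma submod_deg k : submod (deg C k).
Proof.
split=> [|c x y /degP x0 /degP y0]; apply/degP => p q npq; first exact: linear0.
by rewrite linearP /= x0 ?y0 ?scaler0 ?addr0.
Qed.

Lemma deg_d k x : deg C k x -> deg C k.+1 (d x).
Proof.
move/degP=> x0; apply/degP => p q npq; rewrite pr_d.
by case: p npq => [|[|p]] npq /=; case: q npq => [|q] npq /=;
  rewrite ?x0 ?linear0 ?addr0 //; lia.
Qed.

Lemma projG_is_linear k j : linear (projG C k j).
Proof.
move=> a x y; rewrite /projG scaler_sumr -big_split.
by apply: eq_bigr => i _; rewrite linearP.
Qed.

HB.instance Definition _ k j :=
  GRing.isLinear.Build R V V *:%R (projG C k j) (projG_is_linear k j).

Lemma pr_projG p q k j v :
  pr p q (projG C k j v) = if (p + q == k)%N && (j <= q)%N then pr p q v else 0.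
Proof.
pose F (_ : nat) := if (p == k - q)%N then pr p q v else 0.
rewrite linear_sum (eq_bigr (fun i : 'I_k.+1 => if i == q :> nat then F i else 0)).
  rewrite -big_mkcondr (big_ord1_cond_eq _ F (leq j)) {}/F.
  case: (j <= q)%N; rewrite ?andbF ?andbT //.
  have [pqk | npq] := eqVneq (p + q)%N k; first by rewrite ifT ?ifT //; lia.
  by case: ifP => // ltqk; rewrite ifF //; apply/negbTE; lia.
move=> i _; rewrite pr_pr [q == _]eq_sym {}/F.
have [-> | _] := eqVneq (i : nat) q; last by rewrite andbF.
by rewrite andbT; case: eqP => [->|].
Qed.

Lemma deg_projG k j v : deg C k (projG C k j v).
Proof. by apply/degP => p q npq; rewrite pr_projG (negbTE npq). Qed.

Lemma projG_projG k i j v : projG C k j (projG C k i v) = projG C k (maxn i j) v.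
Proof.
apply: eq_from_pr => p q; rewrite !pr_projG geq_max.
by case: (p + q == k)%N; case: (i <= q)%N; case: (j <= q)%N.
Qed.

Lemma projG0_deg k v : deg C k v -> projG C k 0 v = v.
Proof.
move/degP=> v0; apply: eq_from_pr => p q; rewrite pr_projG andbT.
by case: eqP => // /eqP npq; rewrite v0.
Qed.

Lemma projG_inC_lt k j p q u : inC C p q u -> (q < j)%N -> projG C k j u = 0.
Proof.
move=> Cu ltqj; apply: eq_from_pr => a b; rewrite pr_projG linear0 (pr_inC _ _ Cu).
case: ifP => // /andP[_ lejb]; case: ifP => // /andP[_ /eqP ebq]; lia.
Qed.

Lemma projG_eq0 k i x : deg C k x -> projG C k i x = x ->
  projG C k i.+1 x = 0 <-> inC C (k - i) i x.
Proof.
move=> /degP x0 xG; split=> [xG1 | Cx]; last exact: projG_inC_lt Cx _.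
apply: eq_from_pr => p q; rewrite pr_pr.
case: ifP => [/andP[/eqP-> /eqP->] // | neq].
have [pqk | npq] := eqVneq (p + q)%N k; last by rewrite x0.
have := congr1 (pr p q) xG1; rewrite -{2}xG !pr_projG linear0 pqk /=.
case: (ltngtP i q) => [_ | _ | eiq] //=.
by move: neq; rewrite eiq -pqk addnK !eqxx.
Qed.

Lemma projG_top k v : projG C k k v = pr 0 k v.
Proof.
rewrite /projG big_mkcond big_ord_recr /= leqnn subnn big1 ?add0r // => i _.
by rewrite leqNgt ltn_ord.
Qed.

Lemma projG_split k q v :
  projG C k 0 v = \sum_(j < k.+1 | (j < q)%N) pr (k - j) j v + projG C k q v.
Proof.
rewrite /projG (bigID (fun j : 'I_k.+1 => (j < q)%N)) /=.
by congr (_ + _); apply: eq_bigl => j; rewrite -leqNgt.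
Qed.

Lemma submod_inC a b : submod (inC C a b).
Proof. by split=> [|c x y Cx Cy]; rewrite /inC ?linear0 // linearP /= Cx Cy. Qed.

Definition Zpi k j : V -> Prop := imageP (projG C k j) (Z_C C k).

Lemma submod_Z_C k : submod (Z_C C k).
Proof.
have [deg0 deglin] := submod_deg k.
split=> [|c x y [degx dx0] [degy dy0]]; first by split; rewrite ?linear0.
by split; [apply: deglin | rewrite linearP /= dx0 dy0 scaler0 addr0].
Qed.

Lemma submod_B_C k : submod (B_C C k).
Proof.
case: k => [|k]; first by split=> [|c _ _ -> ->]; rewrite ?scaler0 ?addr0.
have [deg0 deglin] := submod_deg k.
split=> [|c _ _ [u [degu ->]] [w [degw ->]]]; first by exists 0; rewrite linear0.
by exists (c *: u + w); rewrite linearP; split; first exact: deglin.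
Qed.

Lemma B_C_Z_C k x : B_C C k x -> Z_C C k x.
Proof.
case: k => [-> | k [u [degu ->]]]; last by split; [exact: deg_d | exact: dd].
by split; [case: (submod_deg 0) | exact: linear0].
Qed.

Lemma Z_C_Zpi0 k x : Z_C C k x <-> Zpi k 0 x.
Proof.
split=> [Zx | [eta [Zeta ->]]]; last by rewrite projG0_deg //; case: Zeta.
by exists x; rewrite projG0_deg //; case: Zx.
Qed.

Lemma B_C_Bcal0 k x : B_C C k x <-> Bcal C k 0 x.
Proof.
split=> [Bx | [b [Bb ->]]]; last by rewrite projG0_deg //; case: (B_C_Z_C Bb).
by exists x; rewrite projG0_deg //; case: (B_C_Z_C Bx).
Qed.

Lemma imageP_projG k i j P : (i <= j)%N ->
  imageP (projG C k j) (imageP (projG C k i) P) = imageP (projG C k j) P.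
Proof.
move=> leij; apply: predext => y; split=> [[_ [[x [Px ->]] ->]] | [x [Px ->]]].
  by exists x; rewrite projG_projG (maxn_idPr leij).
by exists (projG C k i x); split; [exists x | rewrite projG_projG (maxn_idPr leij)].
Qed.

Lemma exact_diagram_filtration k i :
  exact_diagram
    (capP (Bcal C k i) (inC C (k - i) i)) (Bcal C k i) (Bcal C k i.+1)
    (capP (Zpi k i) (inC C (k - i) i)) (Zpi k i) (Zpi k i.+1)
    (projG C k i.+1).
Proof.
have -> : Bcal C k i.+1 = imageP (projG C k i.+1) (Bcal C k i) by rewrite imageP_projG.
have -> : Zpi k i.+1 = imageP (projG C k i.+1) (Zpi k i) by rewrite imageP_projG.
apply: exact_diagram_image.
- exact: submod_image (submod_B_C k).
- exact: submod_image (submod_Z_C k).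
- exact: submod_inC.
- by move=> _ [b [Bb ->]]; exists b; split; first exact: B_C_Z_C.
- move=> _ [eta [_ ->]]; apply: projG_eq0; first exact: deg_projG.
  by rewrite projG_projG maxnn.
Qed.

Lemma Nq0 j m : Nq C j m 0.
Proof. by rewrite /Nq; case: ifP => // _; rewrite /Nc /inC !linear0. Qed.

Lemma Nq_inC j m u : Nq C j m u -> inC C (m - j) j u.
Proof. by rewrite /Nq; case: ifP => _ => [[]|->]; rewrite // /inC linear0. Qed.

Lemma Nq_deg j m u : Nq C j m u -> deg C m u.
Proof.
rewrite /Nq; case: ifP => [lejm [Cu _] | _ ->]; last by case: (submod_deg m).
by rewrite -(subnK lejm); exact: inC_deg.
Qed.

Lemma Zcal_Zpi k q v : Zcal C k q v <-> Zpi k q v.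
Proof.
split=> [[eta [[degeta dB] [dG ->]]] | [eta [[degeta deta0] ->]]]; last first.
  exists eta; split; last by rewrite deta0 linear0.
  split=> // i j _; rewrite deta0 linear0.
  by exists 0; split; [exact: Nq0 | rewrite linear0].
have [deg0 deglin] := submod_deg k.
(* the components of [d eta] below [q] are boundaries of elements of the
   [N_j]; their sum [w] lies below [q] in the filtration *)
have [w [[degw wG] dw]] : exists w, (deg C k w /\ projG C k q w = 0) /\
    \sum_(j < k.+2 | (j < q)%N) pr (k.+1 - j) j (d eta) = d w.
  apply: (big_ind (fun c => exists w, (deg C k w /\ projG C k q w = 0) /\ c = d w)).
  - by exists 0; rewrite !linear0.
  - move=> _ _ [w1 [[deg1 G1] ->]] [w2 [[deg2 G2] ->]].
    exists (w1 + w2); split; last by rewrite linearD.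
    split; last by rewrite linearD /= G1 G2 addr0.
    by rewrite -[w1]scale1r; apply: deglin.
  - move=> j ltjq; have [u [Nu ->]] := dB _ _ (subnK (ltn_ord j : (j <= k.+1)%N)).
    exists u; split=> //; split; first exact: Nq_deg Nu.
    exact: projG_inC_lt (Nq_inC Nu) ltjq.
exists (eta - w); split; last by rewrite linearB /= wG subr0.
split; first exact: submodB (submod_deg k) degeta degw.
have deta := projG_split k.+1 q (d eta).
rewrite projG0_deg ?dG ?addr0 in deta; last exact: deg_d.
by rewrite linearB /= -dw -deta subrr.
Qed.

Lemma rho_rep_component k eta :
  d21 (pr k 1 (projG C k.+1 1 eta)) + d10 (pr k.+1 0 eta) = pr k.+2 0 (d eta).
Proof. by rewrite pr_projG addn1 eqxx /= pr_d /= addr0. Qed.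

Lemma ker_rho_Zpi k xi : ker_rho C k.+1 xi <-> Zpi k.+1 1 xi.
Proof.
split=> [[_ [c [[eta [degeta [etaxi [dG ->]]]] [u [Nu cdu]]]]] |
         [eta [[degeta deta0] ->]]].
  have deg_deta := deg_d degeta.
  have deta : inC C (k.+2 - 0) 0 (d eta).
    by apply/(projG_eq0 deg_deta (projG0_deg deg_deta)).
  exists (eta - u); split; first split.
  - exact: submodB (submod_deg _) degeta (Nq_deg Nu).
  - rewrite linearB /= -cdu -etaxi /= rho_rep_component.
    by rewrite subn0 in deta; rewrite deta subrr.
  - by rewrite linearB /= (projG_inC_lt _ (Nq_inC Nu)) // subr0.
have Ak_xi : Ak C k.+1 (projG C k.+1 1 eta) by exists eta; rewrite deta0 linear0.
split=> //; eexists; split; first by exists eta; rewrite deta0 linear0.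
by exists 0; split; [exact: Nq0 | rewrite linear0 rho_rep_component deta0 linear0].
Qed.

Lemma ker_varrho_Zpi k x : ker_varrho C k.+1 x <-> capP (Zpi k.+1 1) (inC C k 1) x.
Proof.
split=> [[[_ Cx] /ker_rho_Zpi Zx] // | [Zx Cx]].
by have kx := (ker_rho_Zpi k x).2 Zx; split; first split; first exact: kx.1.
Qed.

Lemma Z_N0 k x : Z_N C 0 k x <-> capP (Z_C C k) (inC C k 0) x.
Proof.
rewrite /Z_N /Nq /Nc subn0 /=.
split=> [[[Cx _] dx0] | [[_ dx0] Cx]].
  by split=> //; split=> //; rewrite -[k]addn0; exact: inC_deg.
split=> //; split=> //; split; last by rewrite -Cx d21_deg0.
have := congr1 (pr k 1) dx0; rewrite pr_d !(pr_inC _ _ Cx) /= !andbF.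
by rewrite !linear0 !if_same !add0r !eqxx.
Qed.

Lemma B_col_Bcal k y : B_col C k.+1 y <-> Bcal C k.+1 k.+1 y.
Proof.
split=> [[u [Cu ->]] | [_ [[u [_ ->]] ->]]].
  exists (d u); split; first by exists u; split=> //; exact: (inC_deg Cu).
  by rewrite projG_top pr_d /= !add0r Cu.
rewrite /B_col projG_top pr_d /= !add0r.
by exists (pr 0 k u); split; first exact: pr_idem.
Qed.
End Bicomplex.

Theorem theorem5p7 (R : pzRingType) (V : lmodType R) (C : @bicomplex R V) :
  [/\ exact_diagram
        (capP (B_C C 3) (inC C 3 0)) (B_C C 3) (Bcal C 3 1)
        (Z_N C 0 3) (Z_C C 3) (ker_rho C 3)
        (projG C 3 1),
      exact_diagram
        (capP (Bcal C 3 1) (inC C 2 1)) (Bcal C 3 1) (Bcal C 3 2)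
        (ker_varrho C 3) (ker_rho C 3) (Zcal C 3 2)
        (projG C 3 2)
    & exact_diagram
        (capP (Bcal C 3 2) (inC C 1 2)) (Bcal C 3 2) (B_col C 3)
        (capP (Zcal C 3 2) (inC C 1 2)) (Zcal C 3 2) (Zcal C 3 3)
        (projG C 3 3)].
Proof.
rewrite (predext (Z_N0 C 3)) (predext (Z_C_Zpi0 C 3)) (predext (B_C_Bcal0 C 3)).
rewrite (predext (ker_rho_Zpi C 2)) (predext (ker_varrho_Zpi C 2)).
rewrite (predext (Zcal_Zpi C 3 2)) (predext (Zcal_Zpi C 3 3)) (predext (B_col_Bcal C 2)).
split; [exact: exact_diagram_filtration 3 0 | exact: exact_diagram_filtration 3 1 |
  exact: exact_diagram_filtration 3 2].
Qed.
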